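(* For all integers $1\le k\le n$, $S(n,n-k+1,k)=\binom{n}{k-1}$.
   Context: A $k$-CNF formula is a conjunction of clauses (disjunctions of literals) each of width at most $k$. $\mathrm{sat}_t(F)$ is the set of satisfying assignments of $F$ of Hamming weight exactly $t$. $F$ is $t$-admissible if it has no satisfying assignment of Hamming weight less than $t$. $S(n,t,k)$ is the maximum of $|\mathrm{sat}_t(F)|$ over all $t$-admissible $k$-CNF formulas $F$ on $n$ variables. *)

From mathcomp Require Import all_boot.
Set Implicit Arguments. Unset Strict Implicit. Unset Printing Implicit Defensive.

(* A literal is a pair (i, b): it is the positive literal x_i if b = true
   and the negative literal ~x_i if b = false. *)
Definition literal n := ('I_n * bool)%type.
Definition clause n := {set literal n}.
Definition cnf n := {set clause n}.
Definition assignment n := {ffun 'I_n -> bool}.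

Definition lit_sat n (a : assignment n) (l : literal n) : bool := a l.1 == l.2.
Definition clause_sat n (a : assignment n) (C : clause n) : bool :=
  [exists l in C, lit_sat a l].
Definition cnf_sat n (a : assignment n) (F : cnf n) : bool :=
  [forall C in F, clause_sat a C].

Definition weight n (a : assignment n) : nat := #|[set i | a i]|.

Definition is_kCNF n (k : nat) (F : cnf n) : bool := [forall C in F, #|C| <= k].

Definition sat_t n (t : nat) (F : cnf n) : {set assignment n} :=
  [set a | cnf_sat a F & weight a == t].

Definition admissible n (t : nat) (F : cnf n) : bool :=
  [forall a : assignment n, cnf_sat a F ==> (t <= weight a)].

Definition S (n t k : nat) : nat :=
  \max_(F : cnf n | is_kCNF k F && admissible t F) #|sat_t t F|.

From mathcomp Require Import all_boot.
From mathcomp Require Import zify.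

(* Every formula has at most 'C(n, t) satisfying assignments of weight t, so
   S(n, t, k) <= 'C(n, t). For t = n - k + 1 the bound is attained by the
   formula made of all positive clauses of width k: it is falsified exactly
   when some k variables are all false, i.e. when the weight is at most n - k,
   so it is t-admissible and satisfied by every assignment of weight t. *)

Lemma subset_of_card (T : finType) (D : {set T}) k :
  k <= #|D| -> exists2 B : {set T}, B \subset D & #|B| = k.
Proof.
move=> leD; exists [set x in take k (enum D)].
  by apply/subsetP=> x; rewrite inE => /mem_take; rewrite mem_enum.
have uniq_take : uniq (take k (enum D)) by rewrite take_uniq ?enum_uniq.
by rewrite cardsE (card_uniqP uniq_take) size_takel // -cardE.
Qed.

Section WeightClasses.

Variable n : nat.

Definition ones (a : assignment n) : {set 'I_n} := [set i | a i].

Lemma weight_add_card_onesC (a : assignment n) : weight a + #|~: ones a| = n.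
Proof. exact: etrans (cardsC (ones a)) (card_ord n). Qed.

Lemma card_weight_eq (t : nat) : #|[set a : assignment n | weight a == t]| = 'C(n, t).
Proof.
pose indicator (A : {set 'I_n}) : assignment n := [ffun i => i \in A].
have indicator_inj : injective indicator.
  by move=> A B /ffunP eqAB; apply/setP=> i; have := eqAB i; rewrite !ffunE.
have onesK A : ones (indicator A) = A by apply/setP=> i; rewrite inE ffunE.
suff -> : [set a | weight a == t] = indicator @: [set A : {set 'I_n} | #|A| == t].
  by rewrite card_imset // card_draws card_ord.
apply/setP=> a; rewrite inE; apply/idP/imsetP => [wt | [A]].
  exists (ones a); first by rewrite inE.
  by apply/ffunP=> i; rewrite ffunE inE.
by rewrite inE => cardA ->; rewrite /weight -/(ones _) onesK.
Qed.

Lemma card_sat_t_le_bin t (F : cnf n) : #|sat_t t F| <= 'C(n, t).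
Proof.
rewrite -card_weight_eq; apply: subset_leq_card; apply/subsetP => a.
by rewrite !inE => /andP[].
Qed.

Definition pos_clause (B : {set 'I_n}) : clause n := [set (i, true) | i in B].

Definition pos_clauses (k : nat) : cnf n :=
  [set pos_clause B | B in [set B : {set 'I_n} | #|B| == k]].

Lemma card_pos_clause B : #|pos_clause B| = #|B|.
Proof. by rewrite card_imset // => i j []. Qed.

Lemma clause_sat_pos_clause (a : assignment n) B :
  clause_sat a (pos_clause B) = ~~ (B \subset ~: ones a).
Proof.
rewrite /clause_sat.
apply/exists_inP/subsetPn => [[_ /imsetP[i Bi ->] /eqP ai] | [i Bi]].
  by exists i; rewrite // !inE negbK ai.
by rewrite !inE negbK => ai; exists (i, true); rewrite ?imset_f // /lit_sat ai.
Qed.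

Lemma cnf_sat_pos_clauses (k : nat) (a : assignment n) :
  cnf_sat a (pos_clauses k) = (n < weight a + k).
Proof.
have -> : (n < weight a + k) = (#|~: ones a| < k).
  move: (weight_add_card_onesC a); move: (weight a) #|_| => w c wc.
  by apply/idP/idP; lia.
rewrite /cnf_sat; apply/forall_inP/idP => [sat_a | small C /imsetP[B cardB ->]].
  rewrite ltnNge; apply/negP => /subset_of_card[B sBC cardB].
  have kB : B \in [set B : {set 'I_n} | #|B| == k] by rewrite inE cardB.
  by have := sat_a _ (imset_f pos_clause kB); rewrite clause_sat_pos_clause sBC.
rewrite clause_sat_pos_clause; apply: contraL small => /subset_leq_card.
by rewrite inE in cardB; rewrite (eqP cardB) -leqNgt.
Qed.

Lemma is_kCNF_pos_clauses k : is_kCNF k (pos_clauses k).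
Proof.
apply/forall_inP=> C /imsetP[B cardB ->].
by rewrite inE in cardB; rewrite card_pos_clause (eqP cardB).
Qed.

Lemma admissible_pos_clauses (k t : nat) :
  t + k <= n.+1 -> admissible t (pos_clauses k).
Proof.
by move=> le_tk; apply/forallP=> a; apply/implyP; rewrite cnf_sat_pos_clauses; lia.
Qed.

Lemma sat_t_pos_clauses (k t : nat) :
  n < t + k -> sat_t t (pos_clauses k) = [set a | weight a == t].
Proof.
move=> lt_t; apply/setP=> a; rewrite !inE cnf_sat_pos_clauses.
by case: eqP => [-> | _]; rewrite ?lt_t ?andbF.
Qed.

Lemma leq_card_sat_t_S k t (F : cnf n) :
  is_kCNF k F -> admissible t F -> #|sat_t t F| <= S n t k.
Proof.
move=> kF tF; apply: (@leq_bigmax_cond _ (fun F => is_kCNF k F && admissible t F)).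
by rewrite kF.
Qed.

Lemma S_le_bin k t : S n t k <= 'C(n, t).
Proof. by apply/bigmax_leqP => F _; exact: card_sat_t_le_bin. Qed.

End WeightClasses.

Theorem lemma3 (n k : nat) (hk1 : 1 <= k) (hkn : k <= n) :
  S n (n - k + 1) k = 'C(n, k - 1).
Proof.
have -> : 'C(n, k - 1) = 'C(n, n - k + 1).
  by rewrite -bin_sub; [congr 'C(_, _) | ]; lia.
apply/eqP; rewrite eqn_leq S_le_bin /=.
rewrite -card_weight_eq -(@sat_t_pos_clauses _ k); last by lia.
apply: leq_card_sat_t_S; first exact: is_kCNF_pos_clauses.
by apply: admissible_pos_clauses; lia.
Qed.
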